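(* Let $p\equiv 1\pmod 4$ be a prime, let $\zeta=e^{2\pi\mathbf i/(p-1)}$, and let $g\in\{1,\ldots,p-1\}$ be an integer that is a primitive root modulo $p$. Suppose $\mathfrak p$ is a prime ideal of the ring of integers of $\mathbb Q(\zeta)$ lying above $p$ such that $g\equiv\zeta\pmod{\mathfrak p}$. Then $$\prod_{1\le i<j\le\frac{p-1}{2}}(g^{2j}-g^{2i})\equiv e^{\frac{(p-3)(3p+1)}{16}\pi\mathbf i}\cdot\Big(\frac{p-1}{2}\Big)^{\frac{p-1}{4}}\pmod{\mathfrak p}.$$
   Context: $\mathbf i=\sqrt{-1}$. (Note $e^{\frac{(p-3)(3p+1)}{16}\pi\mathbf i}$ is a root of unity lying in $\mathbb Q(\zeta)$ when $p\equiv1\pmod 4$.) *)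

From HB Require Import structures.
From mathcomp Require Import all_boot all_order all_algebra all_field.
Set Implicit Arguments. Unset Strict Implicit. Unset Printing Implicit Defensive.
Import Order.TTheory GRing.Theory Num.Theory.
Local Open Scope ring_scope.

(* e^{N pi i / d} in algC, for d > 0: d.-root (-1) is the d-th root of -1
   with minimal non-negative argument, i.e. e^{pi i / d}. *)
Definition expPi (N d : nat) : algC := (d.-root (-1)) ^+ N.

Definition inQadj (z x : algC) : Prop :=
  exists q : {poly rat}, x = (map_poly ratr q).[z].

Definition inOK (z x : algC) : Prop := inQadj z x /\ x \in Aint.

Definition prime_ideal_OK (z : algC) (P : algC -> Prop) : Prop :=
  (forall x, P x -> inOK z x) /\
  P 0 /\
  (forall x y, P x -> P y -> P (x + y)) /\
  (forall a x, inOK z a -> P x -> P (a * x)) /\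
  ~ P 1 /\
  (forall x y, inOK z x -> inOK z y -> P (x * y) -> P x \/ P y).

Definition lies_above (P : algC -> Prop) (p : nat) : Prop := P p%:R.

Definition congr_mod (P : algC -> Prop) (x y : algC) : Prop := P (x - y).

From HB Require Import structures.
From mathcomp Require Import all_boot all_order all_algebra all_field.
From mathcomp Require Import zify ring.
Import Order.TTheory GRing.Theory Num.Theory.
Set Implicit Arguments. Unset Strict Implicit. Unset Printing Implicit Defensive.
Local Open Scope ring_scope.

(* Put n = (p-1)/2 = 2m. For a primitive 4m-th root of unity z in any field,
   z^(2j) - z^(2i) = z^(i+j) (z^(j-i) - z^(i-j)); since z^n = -1 the factor for
   the difference d equals the one for n - d, and prod_(0<d<n) (1 - z^(2d)) = n,
   so the whole product is (z^m)^((2m-1)(3m+1)) n^m. Taken in F_p with z = g this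
   is a congruence of integers mod p, hence mod P, and g = zeta mod P turns
   g^m into zeta^m = i.
   Among the d-th roots of x in the closed upper half plane, d.-root x is the
   one of largest real part, so w := (2k).-root (-1) satisfies w^k = i rather
   than -i: differentiating X^(2k) + 1 at w and pairing every other root with
   its conjugate gives -2k = 2 i Im(w) D w^k with D > 0, because every
   (w - y)(w - y^* ) equals 2 w (Re w - Re y). *)

Definition sq_diff_prod {R : comPzRingType} (x : R) n :=
  \prod_(1 <= j < n.+1) \prod_(1 <= i < j) (x ^+ (2 * j) - x ^+ (2 * i)).

Lemma rmorph_sq_diff_prod (R S : comPzRingType) (f : {rmorphism R -> S}) x n :
  f (sq_diff_prod x n) = sq_diff_prod (f x) n.
Proof.
rewrite rmorph_prod; apply: eq_bigr => j _; rewrite rmorph_prod.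
by apply: eq_bigr => i _; rewrite rmorphB !rmorphXn.
Qed.

Lemma sq_diff_prod_natr (R : comPzRingType) g n :
  \prod_(1 <= j < n.+1) \prod_(1 <= i < j) ((g ^ (2 * j))%:R - (g ^ (2 * i))%:R)
  = sq_diff_prod (g%:R : R) n.
Proof. by apply: eq_bigr => j _; apply: eq_bigr => i _; rewrite !natrX. Qed.

Lemma prod_1_sub_prim_root (R : fieldType) n (w : R) :
  n.-primitive_root w -> \prod_(1 <= d < n) (1 - w ^+ d) = n%:R.
Proof.
move=> prim_w; have n_gt0 := prim_order_gt0 prim_w.
have sum_Xn1 : \sum_(i < n) ('X^i : {poly R}).[1] = n%:R.
  rewrite (eq_bigr (fun=> 1)) ?sumr_const ?card_ord // => i _.
  by rewrite hornerXn expr1n.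
have := factor_Xn_sub_1 prim_w; rewrite big_ltn // expr0 subrX1 -polyC1.
move=> /(mulfI (negbT (polyXsubC_eq0 1))) /(congr1 (horner^~ 1)) /=.
rewrite horner_prod horner_sum sum_Xn1 => <-.
by apply: eq_big_nat => d _; rewrite hornerXsubC.
Qed.

Lemma triangular_sum j : ((\sum_(1 <= i < j) i) * 2 + j = j * j)%N.
Proof.
elim: j => [|j IH]; first by rewrite big_geq.
case: j IH => [|j] IH; first by rewrite big_geq.
rewrite big_nat_recr //=; lia.
Qed.

Lemma pair_sum j : ((\sum_(1 <= i < j) (i + j)) * 2 + 3 * j = 3 * j * j)%N.
Proof.
rewrite big_split /= sum_nat_const_nat.
have := triangular_sum j; case: j => [|j]; first by rewrite big_geq.
rewrite subSS subn0; lia.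
Qed.

Lemma double_pair_sum n :
  ((\sum_(1 <= j < n.+1) \sum_(1 <= i < j) (i + j)) * 2 + n = n * n * n)%N.
Proof.
elim: n => [|n IH]; first by rewrite big_geq.
rewrite big_nat_recr //=; have := pair_sum n.+1.
move: IH; set a := (\sum_(1 <= j < n.+1) _)%N; set b := (\sum_(1 <= i < n.+1) _)%N.
nia.
Qed.

Section SqDiffProdPrimRoot.
Variables (F : fieldType) (m : nat) (z : F).
Hypothesis m_gt0 : (0 < m)%N.
Hypothesis z_prim : (4 * m).-primitive_root z.
Let n := (2 * m)%N.

Let z_order : z ^+ (2 * n) = 1.
Proof. by rewrite mulnA prim_expr_order. Qed.

Lemma prim_root_expr_half : z ^+ n = -1.
Proof.
have : z ^+ n != 1.
  by rewrite -(expr0 z) (eq_prim_root_expr z_prim) mod0n modn_small //; lia.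
have /eqP : (z ^+ n) ^+ 2 = 1 by rewrite -exprM mulnC z_order.
by rewrite sqrf_eq1 => /orP[->|/eqP].
Qed.

(* z^d - z^-d, with the inverse written as a natural power since z^(2n) = 1. *)
Definition zsin d := z ^+ d - z ^+ (2 * n - d).

Lemma sub_expr_double_zsin i j : (i <= j <= n)%N ->
  z ^+ (2 * j) - z ^+ (2 * i) = z ^+ (i + j) * zsin (j - i).
Proof.
move=> /andP[le_ij le_jn]; rewrite /zsin mulrBr -!exprD.
have -> : (i + j + (j - i) = 2 * j)%N by lia.
have -> : (i + j + (2 * n - (j - i)) = 2 * n + 2 * i)%N by lia.
by rewrite exprD z_order mul1r.
Qed.

Lemma zsin_sym d : (d <= n)%N -> zsin (n - d) = zsin d.
Proof.
move=> le_dn; rewrite /zsin.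
have -> : (2 * n - (n - d) = n + d)%N by lia.
have -> : (2 * n - d = n + (n - d))%N by lia.
by rewrite (exprD z n d) (exprD z n (n - d)) prim_root_expr_half; ring.
Qed.

Definition zsin_prod l := \prod_(1 <= d < l.+1) zsin d.

Lemma zsin_prod_pair l : (l < n)%N ->
  zsin_prod l * zsin_prod (n.-1 - l) = zsin_prod n.-1.
Proof.
move=> lt_ln; rewrite /zsin_prod [RHS](big_cat_nat _ (n := l.+1)) //=; last by lia.
congr (_ * _); rewrite -(add1n l) big_addn big_nat_rev /=.
rewrite (_ : (n.-1 - l).+1 = n.-1.+1 - l)%N; last by lia.
apply: eq_big_nat => d /andP[_ lt_d]; rewrite -zsin_sym; last by lia.
by congr zsin; lia.
Qed.

(* Row l of the product is zsin_prod l; rows l and n.-1 - l pair up to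
   zsin_prod n.-1, and there are n = 2m rows. *)
Lemma prod_zsin_diff :
  \prod_(1 <= j < n.+1) \prod_(1 <= i < j) zsin (j - i) = zsin_prod n.-1 ^+ m.
Proof.
have -> : \prod_(1 <= j < n.+1) \prod_(1 <= i < j) zsin (j - i) =
          \prod_(0 <= l < n) zsin_prod l.
  rewrite big_add1 /=; apply: eq_big_nat => l _.
  rewrite /zsin_prod big_nat_rev /=; apply: eq_big_nat => i /andP[_ lt_i].
  by congr zsin; lia.
rewrite /n (big_cat_nat _ (n := m)) //=; last by lia.
rewrite -{2}(add0n m) big_addn (_ : 2 * m - m = m)%N; last by lia.
rewrite big_nat_rev /= -big_split /= -(subn0 m) -prodr_const_nat subn0.
apply: eq_big_nat => l /andP[_ lt_lm].
rewrite -(@zsin_prod_pair (m - l.+1)); last by rewrite /n; lia.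
by rewrite add0n; congr (_ * zsin_prod _); rewrite /n; lia.
Qed.

Lemma zsin_prod_full : zsin_prod n.-1 * z ^+ (\sum_(1 <= d < n) d) = - n%:R.
Proof.
have n_gt0 : (0 < n)%N by lia.
have z2_prim : n.-primitive_root (z ^+ 2).
  have := z_prim; rewrite (_ : 4 * m = 2 * n)%N; last by rewrite /n; lia.
  by move/dvdn_prim_root => /(_ n (dvdn_mull 2 (dvdnn n))); rewrite mulnK.
rewrite /zsin_prod prednK // -prodrXr -big_split /=.
rewrite (eq_big_nat _ _ (F2 := fun d => -1 * (1 - (z ^+ 2) ^+ d))); last first.
  move=> d /andP[_ lt_dn]; rewrite /zsin mulrBl -!exprD -exprM.
  rewrite subnK ?z_order; last by lia.
  by rewrite addnn -mul2n mulN1r opprB.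
rewrite big_split /= prod_1_sub_prim_root // prodr_const_nat.
by rewrite -signr_odd (_ : odd (n - 1)) ?mulN1r //; rewrite /n; lia.
Qed.

Lemma sq_diff_prod_exponent :
  (m * ((2 * m - 1) * (3 * m + 1)) + (\sum_(1 <= d < n) d) * m
   = \sum_(1 <= j < n.+1) \sum_(1 <= i < j) (i + j) + n * m
     + 4 * m * (m * (m - 1)))%N.
Proof.
have := double_pair_sum n; have := triangular_sum n; rewrite /n.
set S := (\sum_(1 <= j < _) _)%N; set N := (\sum_(1 <= i < _) _)%N.
case: m m_gt0 => // k _; nia.
Qed.

Lemma sq_diff_prod_prim_root :
  sq_diff_prod z n = (z ^+ m) ^+ ((2 * m - 1) * (3 * m + 1)) * n%:R ^+ m.
Proof.
rewrite /sq_diff_prod.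
rewrite (eq_big_nat _ _ (F2 := fun j =>
    z ^+ (\sum_(1 <= i < j) (i + j)) * \prod_(1 <= i < j) zsin (j - i))); last first.
  move=> j /andP[_ le_jn]; rewrite -prodrXr -big_split /=.
  by apply: eq_big_nat => i /andP[_ lt_ij]; rewrite sub_expr_double_zsin //; lia.
rewrite big_split /= prod_zsin_diff prodrXr.
set N := (\sum_(1 <= d < n) d)%N.
have zN_neq0 : z ^+ (N * m) != 0 by rewrite expf_neq0 // (prim_root_eq0 z_prim); lia.
apply: (mulIf zN_neq0); rewrite exprM -mulrA -exprMn zsin_prod_full.
rewrite -mulN1r exprMn -prim_root_expr_half -!exprM mulrA -exprD mulrAC -exprD.
rewrite sq_diff_prod_exponent (_ : 4 * m = 2 * n)%N; last by lia.
by rewrite [in RHS]exprD exprM z_order expr1n mulr1.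
Qed.

End SqDiffProdPrimRoot.

Section HalfPowerRootN1.
Variable k : nat.
Hypothesis k_gt0 : (0 < k)%N.
Let M := (2 * k)%N.
Let w : algC := M.-root (-1).

Let M_gt0 : (0 < M)%N. Proof. by rewrite /M; lia. Qed.
Let M_gt1 : (1 < M)%N. Proof. by rewrite /M; lia. Qed.

Lemma rootN1K : w ^+ M = -1. Proof. exact: rootCK. Qed.

Section RootOfN1.
Variable y : algC.
Hypothesis yM : y ^+ M = -1.

Lemma rootN1_mul_conj : y * y^* = 1.
Proof.
have : `|y| ^+ M == 1 by rewrite -normrX yM normrN normr1.
by rewrite -normCK pexpr_eq1 // => /eqP->; rewrite expr1n.
Qed.

Lemma rootN1_Im_neq0 : 'Im y != 0.
Proof.
apply/eqP => Imy0; have y_real : y \is Num.real.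
  by rewrite [y]algCrect Imy0 mulr0 addr0 algCreal_Re.
have := real_exprn_even_ge0 (n := M) y_real; rewrite yM /M oddM /=.
by rewrite oppr_ge0 ler10 => /(_ isT).
Qed.

Lemma rootN1_conj : y^* ^+ M = -1.
Proof. by rewrite -rmorphXn yM rmorphN1. Qed.

End RootOfN1.

Lemma Im_rootN1_gt0 : 0 < 'Im w.
Proof. by rewrite lt_def rootN1_Im_neq0 ?rootN1K //= Im_rootC_ge0. Qed.

Let f : {poly algC} := 'X^M + 1%:P.

Definition rootsN1 := sval (closed_field_poly_normal f).

Lemma rootsN1_factor : f = \prod_(y <- rootsN1) ('X - y%:P).
Proof.
rewrite /rootsN1; case: (closed_field_poly_normal f) => r /= {1}->.
by rewrite lead_coefXnaddC // scale1r.
Qed.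

Lemma mem_rootsN1 y : (y \in rootsN1) = (y ^+ M == -1).
Proof. by rewrite -root_prod_XsubC -rootsN1_factor /root !hornerE addr_eq0. Qed.

Lemma rootsN1_uniq : uniq rootsN1.
Proof.
rewrite -separable_prod_XsubC -rootsN1_factor unlock.
apply/Bezout_coprimepP; exists (1, - ((M%:R)^-1 *: 'X)) => /=.
rewrite derivD derivXn derivC addr0 mul1r.
have M_neq0 : M%:R != 0 :> algC by rewrite pnatr_eq0 -lt0n.
rewrite mulNr -scaler_nat -scalerAl -scalerAr scalerA mulVf // scale1r.
by rewrite -exprS prednK // addrC addKr eqpxx.
Qed.

Lemma size_rootsN1 : size rootsN1 = M.
Proof.
have : size f = M.+1 by rewrite size_XnaddC.
by rewrite rootsN1_factor size_prod_XsubC; case.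
Qed.

Definition upper_rootsN1 := [seq y <- rootsN1 | 0 <= 'Im y].

Lemma perm_lower_rootsN1 :
  perm_eq [seq y <- rootsN1 | ~~ (0 <= 'Im y)] (map (fun y : algC => y^*) upper_rootsN1).
Proof.
apply: uniq_perm; first exact: filter_uniq rootsN1_uniq.
  by rewrite (map_inj_uniq (can_inj conjCK)) filter_uniq ?rootsN1_uniq.
move=> y; apply/idP/idP.
  rewrite mem_filter -real_ltNge ?algCreal_Im // mem_rootsN1.
  move=> /andP[Imy_lt0 /eqP yM]; apply/mapP; exists y^*; last by rewrite conjCK.
  by rewrite mem_filter Im_conj oppr_ge0 (ltW Imy_lt0) mem_rootsN1 rootN1_conj ?eqxx.
case/mapP => x; rewrite mem_filter mem_rootsN1 => /andP[Imx_ge0 /eqP xM] ->.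
rewrite mem_filter mem_rootsN1 rootN1_conj // eqxx andbT Im_conj oppr_ge0.
by rewrite -real_ltNge ?algCreal_Im // lt_def Imx_ge0 rootN1_Im_neq0.
Qed.

Lemma size_upper_rootsN1 : size upper_rootsN1 = k.
Proof.
have := count_predC (fun y => 0 <= 'Im y) rootsN1.
rewrite size_rootsN1 -!size_filter (perm_size perm_lower_rootsN1) size_map.
by rewrite -/upper_rootsN1 /M; move: (size _); lia.
Qed.

Lemma w_upper_rootsN1 : w \in upper_rootsN1.
Proof. by rewrite mem_filter Im_rootC_ge0 // mem_rootsN1 rootN1K eqxx. Qed.

Lemma deriv_rootsN1 : w ^+ M.-1 *+ M = \prod_(y <- rootsN1 | y != w) (w - y).
Proof.
have w_roots : w \in rootsN1 by rewrite mem_rootsN1 rootN1K.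
have := congr1 (fun q => q^`().[w]) rootsN1_factor.
rewrite (bigD1_seq w) ?rootsN1_uniq //= derivM derivXsubC mul1r hornerD hornerM.
rewrite hornerXsubC subrr mul0r addr0 horner_prod derivD derivXn derivC addr0.
rewrite hornerMn horner_exp hornerX => ->.
by apply: eq_bigr => y _; rewrite hornerXsubC.
Qed.

Lemma sub_root_conj_pair y : y ^+ M = -1 ->
  (w - y) * (w - y^*) = w * (2 * ('Re w - 'Re y)).
Proof.
move=> yM; have yy := rootN1_mul_conj yM; have ww := rootN1_mul_conj rootN1K.
rewrite !ReE; apply/eqP; rewrite -subr_eq0; apply/eqP.
have -> : (w - y) * (w - y^*) - w * (2 * ((w + w^*) / 2 - (y + y^*) / 2)) =
  y * y^* - w * w^* by field.
by rewrite yy ww subrr.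
Qed.

Lemma Re_rootN1_gap_gt0 y : y \in upper_rootsN1 -> y != w ->
  0 < 2 * ('Re w - 'Re y).
Proof.
rewrite mem_filter mem_rootsN1 => /andP[Imy_ge0 /eqP yM] y_neq_w.
rewrite pmulr_rgt0 ?ltr0n // subr_gt0 lt_def rootC_Re_max // andbT.
apply: contraNneq y_neq_w => Re_eq.
have Im_sq : 'Im y ^+ 2 = 'Im w ^+ 2.
  have norm1 (x : algC) : x ^+ M = -1 -> `|x| ^+ 2 = 1.
    by move=> xM; rewrite normCK rootN1_mul_conj.
  have := normC2_Re_Im y; have := normC2_Re_Im w.
  by rewrite !norm1 ?rootN1K // Re_eq => -> /addrI.
have : 'Im y == 'Im w by rewrite -(eqrXn2 (n := 2)) // ?Im_sq // ltW ?Im_rootN1_gt0.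
move/eqP => Im_eq; apply/eqP.
by rewrite [y]algCrect [w in _ = w]algCrect -Re_eq Im_eq.
Qed.

Lemma prod_rootsN1_neq : \prod_(y <- rootsN1 | y != w) (w - y) =
  (w - w^*) * (w ^+ k.-1 * \prod_(y <- upper_rootsN1 | y != w) (2 * ('Re w - 'Re y))).
Proof.
rewrite (bigID (fun y => 0 <= 'Im y)) /=.
have -> : \prod_(y <- rootsN1 | (y != w) && (0 <= 'Im y)) (w - y) =
    \prod_(y <- upper_rootsN1 | y != w) (w - y).
  by rewrite big_filter_cond; apply: eq_bigl => y; rewrite andbC.
have -> : \prod_(y <- rootsN1 | (y != w) && ~~ (0 <= 'Im y)) (w - y) =
    \prod_(y <- [seq y <- rootsN1 | ~~ (0 <= 'Im y)]) (w - y).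
  rewrite big_filter; apply: eq_bigl => y.
  by case: eqP => // ->; rewrite Im_rootC_ge0.
rewrite (perm_big _ perm_lower_rootsN1) big_map.
rewrite (bigD1_seq w) ?w_upper_rootsN1 ?filter_uniq ?rootsN1_uniq //=.
rewrite mulrCA -big_split /=; congr (_ * _).
rewrite big_seq_cond (eq_bigr (fun y => w * (2 * ('Re w - 'Re y)))); last first.
  move=> y /andP[]; rewrite mem_filter mem_rootsN1 => /andP[_ /eqP yM] _.
  exact: sub_root_conj_pair.
rewrite big_split /= -!big_seq_cond; congr (_ * _).
rewrite (eq_bigr (fun _ => w ^+ 1)) ?prodrXr ?sum1_count; last by move=> *.
have := count_predC (pred1 w) upper_rootsN1.
rewrite count_uniq_mem ?filter_uniq ?rootsN1_uniq // w_upper_rootsN1.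
by rewrite size_upper_rootsN1 => <-.
Qed.

Lemma rootN1_expr_half : w ^+ k = 'i.
Proof.
set D := \prod_(y <- upper_rootsN1 | y != w) (2 * ('Re w - 'Re y)).
have D_gt0 : 0 < D.
  by rewrite /D big_seq_cond; apply: prodr_gt0 => y /andP[]; apply: Re_rootN1_gap_gt0.
have w_sub_conj : w - w^* = 'i * (2 * 'Im w).
  rewrite ImE; transitivity (- 'i ^+ 2 * (w - w^*)).
    by rewrite sqrCi opprK mul1r.
  by field.
have : - M%:R = 'i * w ^+ k * (2 * 'Im w * D).
  have := congr1 ( *%R w) deriv_rootsN1.
  rewrite /= prod_rootsN1_neq mulrnAr -exprS prednK // rootN1K mulNrn => ->.
  by rewrite mulrCA (mulrA w) -exprS prednK // w_sub_conj /D; ring.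
have /eqP : (w ^+ k - 'i) * (w ^+ k + 'i) = 0.
  by rewrite -subr_sqr -exprM mulnC rootN1K sqrCi subrr.
rewrite mulf_eq0 subr_eq0 addr_eq0 => /orP[/eqP // | /eqP ->].
rewrite mulrN -expr2 sqrCi opprK mul1r => eqM.
suff : 0 < 2 * 'Im w * D by rewrite -eqM oppr_gt0 ltrn0.
by rewrite !mulr_gt0 ?Im_rootN1_gt0.
Qed.

End HalfPowerRootN1.

Lemma expPi_unity_root N d : (0 < d)%N -> (2 * d).-unity_root (expPi N d).
Proof.
move=> d_gt0; rewrite unity_rootE /expPi -exprM.
rewrite (_ : N * (2 * d) = d * (2 * N))%N; last by lia.
by rewrite exprM rootCK // -signr_odd oddM.
Qed.

Section IntegersOfQz.
Variable z : algC.

Lemma inOKD x y : inOK z x -> inOK z y -> inOK z (x + y).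
Proof.
move=> [[q1 ->] x_int] [[q2 ->] y_int]; split; last exact: rpredD.
by exists (q1 + q2); rewrite rmorphD hornerD.
Qed.

Lemma inOKM x y : inOK z x -> inOK z y -> inOK z (x * y).
Proof.
move=> [[q1 ->] x_int] [[q2 ->] y_int]; split; last exact: rpredM.
by exists (q1 * q2); rewrite rmorphM hornerM.
Qed.

Lemma inOKX x n : inOK z x -> inOK z (x ^+ n).
Proof.
move=> x_OK; elim: n => [|n IH]; last by rewrite exprS; apply: inOKM.
by split; [exists 1; rewrite rmorph1 hornerC | exact: rpred1].
Qed.

Lemma inOK_intr (a : int) : inOK z a%:~R.
Proof.
split; last exact: Aint_int.
by exists a%:~R%:P; rewrite map_polyC hornerC /= ratr_int.
Qed.

Lemma inOK_nat n : inOK z n%:R.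
Proof. exact: (inOK_intr n). Qed.

Lemma inOK_unity_root n : (0 < n)%N -> n.-unity_root z -> inOK z z.
Proof.
move=> n_gt0 z_root; split; last exact: Aint_unity_root n_gt0 z_root.
by exists 'X; rewrite map_polyX hornerX.
Qed.

Variable P : algC -> Prop.
Hypothesis P_ideal : prime_ideal_OK z P.

Lemma congr_mod_trans x y t :
  congr_mod P x y -> congr_mod P y t -> congr_mod P x t.
Proof.
case: P_ideal => _ [_ [P_add _]] Pxy Pyt.
by rewrite /congr_mod -[x](subrK y) -addrA; apply: P_add.
Qed.

Lemma congr_modMr a x y : inOK z a -> congr_mod P x y -> congr_mod P (x * a) (y * a).
Proof.
case: P_ideal => _ [_ [_ [P_mul _]]] a_OK Pxy.
by rewrite /congr_mod -mulrBl mulrC; apply: P_mul.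
Qed.

Lemma congr_modX x y n : inOK z x -> inOK z y ->
  congr_mod P x y -> congr_mod P (x ^+ n) (y ^+ n).
Proof.
case: P_ideal => _ [_ [_ [P_mul _]]] x_OK y_OK Pxy.
rewrite /congr_mod subrXX mulrC; apply: P_mul Pxy.
apply: (big_ind (inOK z)); [exact: inOK_nat 0 | exact: inOKD | ].
by move=> i _; apply: inOKM; apply: inOKX.
Qed.

Lemma congr_mod_intr p (a b : int) : prime p -> lies_above P p ->
  (a%:~R : 'F_p) = b%:~R -> congr_mod P a%:~R b%:~R.
Proof.
case: P_ideal => _ [_ [_ [P_mul _]]] p_prime P_p /eqP.
rewrite -subr_eq0 -rmorphB -(dvdz_pcharf (pchar_Fp p_prime)) => /dvdzP[q ab_eq].
by rewrite /congr_mod -rmorphB ab_eq rmorphM; apply: P_mul (inOK_intr q) P_p.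
Qed.

End IntegersOfQz.

Lemma congr_sq_diff_prod_prim_root z P p m g : prime_ideal_OK z P ->
  prime p -> lies_above P p -> (0 < m)%N ->
  (4 * m).-primitive_root (g%:R : 'F_p) ->
  congr_mod P (sq_diff_prod g%:R (2 * m))
    ((g%:R ^+ m) ^+ ((2 * m - 1) * (3 * m + 1)) * (2 * m)%:R ^+ m).
Proof.
move=> P_ideal p_prime P_p m_gt0 g_prim.
pose A := sq_diff_prod g%:Z (2 * m).
pose B := (g%:Z ^+ m) ^+ ((2 * m - 1) * (3 * m + 1)) * (2 * m)%:Z ^+ m.
have intr_AB (R : comNzRingType) : (A%:~R : R) = sq_diff_prod g%:R (2 * m) /\
    (B%:~R : R) = (g%:R ^+ m) ^+ ((2 * m - 1) * (3 * m + 1)) * (2 * m)%:R ^+ m.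
  by split; [rewrite rmorph_sq_diff_prod | rewrite rmorphM !rmorphXn].
have [<- <-] := intr_AB algC; apply: (congr_mod_intr P_ideal p_prime P_p).
by have [-> ->] := intr_AB 'F_p; rewrite sq_diff_prod_prim_root.
Qed.

Theorem lemma2p2 (p g : nat) (P : algC -> Prop) :
  prime p -> (p %% 4 = 1)%N ->
  let zeta : algC := expPi 2 p.-1 in
  (1 <= g <= p.-1)%N ->
  (p.-1).-primitive_root (g%:R : 'F_p) ->
  prime_ideal_OK zeta P -> lies_above P p ->
  congr_mod P g%:R zeta ->
  congr_mod P
    (\prod_(1 <= j < (p.-1 %/ 2).+1) \prod_(1 <= i < j)
        ((g ^ (2 * j))%:R - (g ^ (2 * i))%:R))
    (expPi ((p - 3) * (3 * p + 1)) 16 * ((p.-1 %/ 2)%:R) ^+ (p.-1 %/ 4)).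
Proof.
move=> p_prime p_mod4 zeta _ g_prim P_ideal P_p g_zeta.
have p_gt1 := prime_gt1 p_prime; set m := (p.-1 %/ 4)%N.
have p1_eq : p.-1 = (4 * m)%N by rewrite /m; lia.
have m_gt0 : (0 < m)%N by lia.
rewrite p1_eq in g_prim.
rewrite (_ : p.-1 %/ 2 = 2 * m)%N; last by rewrite p1_eq; lia.
set E := ((2 * m - 1) * (3 * m + 1))%N.
have zeta_m : zeta ^+ m = 'i.
  rewrite /zeta /expPi -exprM p1_eq (_ : 4 * m = 2 * (2 * m))%N; last by lia.
  by rewrite rootN1_expr_half //; lia.
have expPi_E : expPi ((p - 3) * (3 * p + 1)) 16 = 'i ^+ E.
  rewrite /expPi (_ : (p - 3) * (3 * p + 1) = 8 * E)%N; last by rewrite /E; nia.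
  by rewrite exprM (_ : 16 = 2 * 8)%N // rootN1_expr_half.
have zeta_OK : inOK zeta zeta.
  by apply: inOK_unity_root (expPi_unity_root _ _); rewrite p1_eq; lia.
rewrite sq_diff_prod_natr expPi_E -zeta_m.
apply: (congr_mod_trans P_ideal (y := (g%:R ^+ m) ^+ E * (2 * m)%:R ^+ m)).
  exact: congr_sq_diff_prod_prim_root P_ideal p_prime P_p m_gt0 g_prim.
apply: (congr_modMr P_ideal); first exact: inOKX (inOK_nat _ _).
rewrite -!(exprM _ m E); apply: (congr_modX P_ideal) g_zeta => //; exact: inOK_nat.
Qed.
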